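(* Let $(A,\mathcal H)$ be a left bialgebroid such that ${}_s\mathcal H$ is $A$-flat. Then for every left ideal two-sided coideal $I$ of $\mathcal H$, $\mathcal H^{\mathrm{co}\,\mathcal H/I}$ is a right $\mathcal H$-comodule $A^o$-subring of $\mathcal H$ via $t$ (with coaction induced by $\Delta$), and the assignment $I\mapsto\mathcal H^{\mathrm{co}\,\mathcal H/I}$ is inclusion-preserving.
   Context: $\Bbbk$ is a field. A left bialgebroid $(A,\mathcal H)$: $\Bbbk$-algebras $A,\mathcal H$, algebra maps $s:A\to\mathcal H$, $t:A^o\to\mathcal H$ with commuting images, $A$-bilinear $\Delta:\mathcal H\to\mathcal H\otimes_A\mathcal H$, $\varepsilon:\mathcal H\to A$ (bimodule structure $a\cdot h\cdot b=s(a)t(b)h$; $\mathcal H\otimes_A\mathcal H$ = quotient of $\mathcal H\otimes\mathcal H$ by span of $t(a)x\otimes y-x\otimes s(a)y$), with $(\mathcal H,\Delta,\varepsilon)$ a coassociative counital $A$-coring, $\Delta$ an algebra map into the Takeuchi product $\{\sum x_i\otimes_Ay_i:\sum x_it(a)\otimes_Ay_i=\sum x_i\otimes_Ay_is(a)\ \forall a\}$, $\varepsilon(xs(\varepsilon(y)))=\varepsilon(xy)=\varepsilon(xt(\varepsilon(y)))$, $\varepsilon(1)=1$; $\Delta(x)=\sum x_1\otimes_Ax_2$. ''${}_s\mathcal H$ is $A$-flat'': flat as left $A$-module via $s$. Left ideal two-sided coideal: left ideal $I$ with $\varepsilon(I)=0$, $\Delta(I)\subseteq$ image of $I\otimes_A\mathcal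 H+\mathcal H\otimes_AI$; with $\pi:\mathcal H\to\mathcal H/I$, $\mathcal H^{\mathrm{co}\,\mathcal H/I}=\{x:\sum\pi(x_1)\otimes_Ax_2=\pi(1)\otimes_Ax\text{ in }\mathcal H/I\otimes_A\mathcal H\}$. Right $\mathcal H$-comodule $A^o$-subring via $t$: subalgebra $B\supseteq t(A)$ with a coassociative counital right $A$-linear coaction $\delta:B\to B\otimes_A\mathcal H$ ($b\cdot a=t(a)b$; $\mathcal H$ left via $s$) such that $(\iota\otimes_A\mathcal H)\delta=\Delta\iota$, $\iota:B\to\mathcal H$ the inclusion. *)

From HB Require Import structures.
From mathcomp Require Import all_boot all_order all_algebra.
Set Implicit Arguments. Unset Strict Implicit. Unset Printing Implicit Defensive.
Import GRing.Theory.
Local Open Scope ring_scope.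

(* Balanced tensor products  L (x)_A R  of a right A-module L (action ra)     *)
(* and a left A-module R (action la), both k-vector spaces.  An element is a  *)
(* formal finite sum  sum_i x_i (x) y_i  represented by the sequence of pairs *)
(* [:: (x_i, y_i)], and  tens_eq s1 s2  means the two sums are equal in the   *)
(* tensor product.  P, Q restrict the factors to k-subspaces (stable under    *)
(* the actions), used for B (x)_A H with B a subring of H; Z is a subspace of *)
(* the left factor that is killed, used for (L/Z) (x)_A R.                    *)
(* tens_eq is the congruence on the free commutative monoid of formal sums    *)
(* generated by biadditivity, k-balancedness, A-balancedness, 0 (x) y = 0 and *)
(* z (x) y = 0 for z in Z; the quotient is exactly the abelian group          *)
(* (k-vector space) (L/Z) (x)_A R, resp. P (x)_A Q.                           *)

Definition wf2 (L R : eqType) (P : L -> Prop) (Q : R -> Prop) (s : seq (L * R)) :=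
  forall p, p \in s -> P p.1 /\ Q p.2.

Inductive tens_eq (k : fieldType) (A : Type) (L R : lmodType k)
    (ra : L -> A -> L) (la : A -> R -> R)
    (P : L -> Prop) (Q : R -> Prop) (Z : L -> Prop) :
    seq (L * R) -> seq (L * R) -> Prop :=
| te_refl s : wf2 P Q s -> tens_eq ra la P Q Z s s
| te_sym s1 s2 : tens_eq ra la P Q Z s1 s2 -> tens_eq ra la P Q Z s2 s1
| te_trans s1 s2 s3 : tens_eq ra la P Q Z s1 s2 -> tens_eq ra la P Q Z s2 s3 ->
    tens_eq ra la P Q Z s1 s3
| te_cat s1 s2 s3 s4 : tens_eq ra la P Q Z s1 s2 -> tens_eq ra la P Q Z s3 s4 ->
    tens_eq ra la P Q Z (s1 ++ s3) (s2 ++ s4)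
| te_comm s1 s2 : wf2 P Q s1 -> wf2 P Q s2 ->
    tens_eq ra la P Q Z (s1 ++ s2) (s2 ++ s1)
| te_addl x x' y : P x -> P x' -> Q y ->
    tens_eq ra la P Q Z [:: (x + x', y)] [:: (x, y); (x', y)]
| te_addr x y y' : P x -> Q y -> Q y' ->
    tens_eq ra la P Q Z [:: (x, y + y')] [:: (x, y); (x, y')]
| te_scal (c : k) x y : P x -> Q y ->
    tens_eq ra la P Q Z [:: (c *: x, y)] [:: (x, c *: y)]
| te_zero y : P 0 -> Q y -> tens_eq ra la P Q Z [:: (0, y)] [::]
| te_bal a x y : P x -> Q y -> P (ra x a) -> Q (la a y) ->
    tens_eq ra la P Q Z [:: (ra x a, y)] [:: (x, la a y)]
| te_kill z y : P z -> Z z -> Q y -> tens_eq ra la P Q Z [:: (z, y)] [::].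

(* Triple balanced tensor products  L (x)_A M (x)_A R, first factor in P1.   *)
Definition wf3 (L M R : eqType) (P1 : L -> Prop) (s : seq (L * M * R)) :=
  forall p, p \in s -> P1 p.1.1.

Inductive tens3_eq (k : fieldType) (A : Type) (L M R : lmodType k)
    (r1 : L -> A -> L) (l2 : A -> M -> M) (r2 : M -> A -> M) (l3 : A -> R -> R)
    (P1 : L -> Prop) : seq (L * M * R) -> seq (L * M * R) -> Prop :=
| t3_refl s : wf3 P1 s -> tens3_eq r1 l2 r2 l3 P1 s s
| t3_sym s1 s2 : tens3_eq r1 l2 r2 l3 P1 s1 s2 -> tens3_eq r1 l2 r2 l3 P1 s2 s1
| t3_trans s1 s2 s3 : tens3_eq r1 l2 r2 l3 P1 s1 s2 ->
    tens3_eq r1 l2 r2 l3 P1 s2 s3 -> tens3_eq r1 l2 r2 l3 P1 s1 s3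
| t3_cat s1 s2 s3 s4 : tens3_eq r1 l2 r2 l3 P1 s1 s2 ->
    tens3_eq r1 l2 r2 l3 P1 s3 s4 -> tens3_eq r1 l2 r2 l3 P1 (s1 ++ s3) (s2 ++ s4)
| t3_comm s1 s2 : wf3 P1 s1 -> wf3 P1 s2 ->
    tens3_eq r1 l2 r2 l3 P1 (s1 ++ s2) (s2 ++ s1)
| t3_add1 x x' y z : P1 x -> P1 x' ->
    tens3_eq r1 l2 r2 l3 P1 [:: (x + x', y, z)] [:: (x, y, z); (x', y, z)]
| t3_add2 x y y' z : P1 x ->
    tens3_eq r1 l2 r2 l3 P1 [:: (x, y + y', z)] [:: (x, y, z); (x, y', z)]
| t3_add3 x y z z' : P1 x ->
    tens3_eq r1 l2 r2 l3 P1 [:: (x, y, z + z')] [:: (x, y, z); (x, y, z')]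
| t3_scal12 (c : k) x y z : P1 x ->
    tens3_eq r1 l2 r2 l3 P1 [:: (c *: x, y, z)] [:: (x, c *: y, z)]
| t3_scal23 (c : k) x y z : P1 x ->
    tens3_eq r1 l2 r2 l3 P1 [:: (x, c *: y, z)] [:: (x, y, c *: z)]
| t3_zero y z : P1 0 -> tens3_eq r1 l2 r2 l3 P1 [:: (0, y, z)] [::]
| t3_bal12 a x y z : P1 x -> P1 (r1 x a) ->
    tens3_eq r1 l2 r2 l3 P1 [:: (r1 x a, y, z)] [:: (x, l2 a y, z)]
| t3_bal23 a x y z : P1 x ->
    tens3_eq r1 l2 r2 l3 P1 [:: (x, r2 y a, z)] [:: (x, y, l3 a z)].

Section Bialgebroid.
Variables (k : fieldType) (A H : algType k).
Variables (s t : A -> H).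

(* H as an A-bimodule:  a . h . b = s(a) t(b) h *)
Definition Hr (x : H) (a : A) : H := t a * x.
Definition Hl (a : A) (y : H) : H := s a * y.

Definition allH : H -> Prop := fun _ => True.
Definition noneH : H -> Prop := fun _ => False.

(* equality in H (x)_A H *)
Definition teqHH := tens_eq Hr Hl allH allH noneH.
(* equality in (H/I) (x)_A H *)
Definition teqQH (I : H -> Prop) := tens_eq Hr Hl allH allH I.
(* equality in B (x)_A H, B a subspace of H stable under t(A) . _ *)
Definition teqBH (B : H -> Prop) := tens_eq Hr Hl B allH noneH.
(* equality in B (x)_A H (x)_A H *)
Definition teqB3 (B : H -> Prop) := tens3_eq Hr Hl Hr Hl B.

Definition tscale (c : k) (u : seq (H * H)) := [seq (c *: p.1, p.2) | p <- u].

Definition kalg_map (f : A -> H) :=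
  [/\ forall (c : k) x y, f (c *: x + y) = c *: f x + f y,
      f 1 = 1 & forall x y, f (x * y) = f x * f y].
(* algebra map  A^o -> H *)
Definition kalg_antimap (f : A -> H) :=
  [/\ forall (c : k) x y, f (c *: x + y) = c *: f x + f y,
      f 1 = 1 & forall x y, f (x * y) = f y * f x].

Definition base_maps :=
  [/\ kalg_map s, kalg_antimap t & forall a b, s a * t b = t b * s a].

Definition coring_axioms (Delta : H -> seq (H * H)) (eps : H -> A) :=
  [/\
      (forall (c : k) x y, teqHH (Delta (c *: x + y)) (tscale c (Delta x) ++ Delta y)),
      (forall a b h, teqHH (Delta (s a * t b * h))
                           [seq (s a * p.1, t b * p.2) | p <- Delta h]),
      (forall (c : k) x y, eps (c *: x + y) = c *: eps x + eps y),
      (forall a b h, eps (s a * t b * h) = a * eps h * b) &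
   [/\
      (forall x, teqB3 allH
          (flatten [seq [seq (q.1, q.2, p.2) | q <- Delta p.1] | p <- Delta x])
          (flatten [seq [seq (p.1, q.1, q.2) | q <- Delta p.2] | p <- Delta x])),
      (* counitality, via A (x)_A H ~ H, a (x) h |-> s(a) h, and
         H (x)_A A ~ H, h (x) a |-> t(a) h *)
      (forall x, \sum_(p <- Delta x) s (eps p.1) * p.2 = x) &
      (forall x, \sum_(p <- Delta x) t (eps p.2) * p.1 = x)]].

Definition bialg_axioms (Delta : H -> seq (H * H)) (eps : H -> A) :=
  [/\ (* Delta lands in the Takeuchi product *)
      (forall x a, teqHH [seq (p.1 * t a, p.2) | p <- Delta x]
                         [seq (p.1, p.2 * s a) | p <- Delta x]),
      (* Delta is an algebra map into the Takeuchi product *)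
      (forall x y, teqHH (Delta (x * y))
          (flatten [seq [seq (p.1 * q.1, p.2 * q.2) | q <- Delta y] | p <- Delta x])),
      teqHH (Delta 1) [:: (1, 1)],
      (forall x y, eps (x * s (eps y)) = eps (x * y) /\
                   eps (x * y) = eps (x * t (eps y))) &
      eps 1 = 1].

Definition left_bialgebroid (Delta : H -> seq (H * H)) (eps : H -> A) : Prop :=
  [/\ base_maps, coring_axioms Delta eps & bialg_axioms Delta eps].

Definition right_Amod (M : lmodType k) (r : M -> A -> M) :=
  [/\ forall x y a, r (x + y) a = r x a + r y a,
      forall x a b, r x (a + b) = r x a + r x b,
      forall x a b, r (r x a) b = r x (a * b),
      forall x, r x 1 = x &
      forall (c : k) x a, r (c *: x) a = c *: r x a /\ r x (c *: a) = c *: r x a].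

(* _s H is flat as a left A-module: - (x)_A _sH preserves injections of
   right A-modules *)
Definition sH_flat : Prop :=
  forall (M N : lmodType k) (rM : M -> A -> M) (rN : N -> A -> N) (f : M -> N),
    right_Amod rM -> right_Amod rN ->
    (forall (c : k) x y, f (c *: x + y) = c *: f x + f y) ->
    (forall x a, f (rM x a) = rN (f x) a) ->
    injective f ->
    forall u v : seq (M * H),
      tens_eq rN Hl (fun _ => True) allH (fun _ => False)
              [seq (f p.1, p.2) | p <- u] [seq (f p.1, p.2) | p <- v] ->
      tens_eq rM Hl (fun _ => True) allH (fun _ => False) u v.

Variables (Delta : H -> seq (H * H)) (eps : H -> A).

Definition left_ideal_coideal (I : H -> Prop) : Prop :=
  [/\ I 0, (forall (c : k) x y, I x -> I y -> I (c *: x + y)),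
      (forall h x, I x -> I (h * x)),
      (forall x, I x -> eps x = 0) &
      (forall x, I x -> exists u : seq (H * H),
          (forall p, p \in u -> I p.1 \/ I p.2) /\ teqHH (Delta x) u)].

Definition coinv (I : H -> Prop) (x : H) : Prop :=
  teqQH I (Delta x) [:: (1, x)].

Definition right_comodule_subring (B : H -> Prop) (delta : H -> seq (H * H)) :=
  [/\
      [/\ B 0, B 1,
          (forall (c : k) x y, B x -> B y -> B (c *: x + y)),
          (forall x y, B x -> B y -> B (x * y)) &
          (forall a, B (t a))],
      (forall b, B b -> forall p, p \in delta b -> B p.1),
      (* delta is k-linear and right A-linear, with b . a = t(a) b *)
      (forall (c : k) x y, B x -> B y ->
          teqBH B (delta (c *: x + y)) (tscale c (delta x) ++ delta y)),
      (forall a b, B b -> teqBH B (delta (t a * b)) [seq (p.1, t a * p.2) | p <- delta b]) &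
   [/\
      (forall b, B b -> teqB3 B
          (flatten [seq [seq (q.1, q.2, p.2) | q <- delta p.1] | p <- delta b])
          (flatten [seq [seq (p.1, q.1, q.2) | q <- Delta p.2] | p <- delta b])),
      (* counital (B (x)_A A ~ B, b (x) a |-> t(a) b) *)
      (forall b, B b -> \sum_(p <- delta b) t (eps p.2) * p.1 = b) &
      (* (iota (x)_A H) delta = Delta iota, in H (x)_A H *)
      (forall b, B b -> teqHH (delta b) (Delta b))]].

End Bialgebroid.

From HB Require Import structures.
From mathcomp Require Import all_boot all_order all_algebra.
From mathcomp Require Import boolp.
Set Implicit Arguments. Unset Strict Implicit. Unset Printing Implicit Defensive.
Import GRing.Theory.
Local Open Scope ring_scope.

(* Coinvariants form a subalgebra containing t(A): Delta is multiplicative with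
   values in the Takeuchi product, and left multiplication by Delta x is well
   defined on (H/I) (x)_A H since I is a left ideal.
   The coinvariants are the kernel of  phi x = pi(x_1) (x) x_2 - pi(1) (x) x.
   For coinvariant b, coassociativity gives (phi (x) H)(Delta b) = 0 in
   ((H/I) (x)_A H) (x)_A H.  By flatness of _sH, Im phi (x)_A H embeds there,
   so Delta b vanishes in (H/B) (x)_A H and hence lifts to B (x)_A H.  Flatness
   also embeds B (x)_A H and B (x)_A H (x)_A H into H (x)_A H and
   H (x)_A H (x)_A H, so the comodule axioms of the lift follow from those of
   Delta.  Monotonicity holds because a larger I imposes more relations. *)

Lemma perm_flatten_map_cat (I : Type) (T : eqType) (f g : I -> seq T) (u : seq I) :
  perm_eq (flatten [seq f i ++ g i | i <- u])
          (flatten (map f u) ++ flatten (map g u)).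
Proof.
elim: u => [|i u IH] //=; rewrite -!catA perm_cat2l.
by rewrite perm_sym perm_catCA perm_cat2l perm_sym.
Qed.

Lemma perm_allpairs_swap (I J : Type) (T : eqType) (f : I -> J -> T)
    (u : seq I) (v : seq J) :
  perm_eq (flatten [seq [seq f i j | j <- v] | i <- u])
          (flatten [seq [seq f i j | i <- u] | j <- v]).
Proof.
elim: u => [|i u IH] /=; first by elim: v.
apply: perm_trans (_ : perm_eq _ ([seq f i j | j <- v] ++
   flatten [seq [seq f i0 j | i0 <- u] | j <- v])) _; first by rewrite perm_cat2l.
rewrite perm_sym.
apply: perm_trans (perm_flatten_map_cat (fun j => [:: f i j]) _ v) _.
by rewrite flatten_map1.
Qed.

(* Reflexivity and commutativity are only asked of sums whose terms satisfy
   [W], matching the well-formedness side conditions of [tens_eq] and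
   [tens3_eq]. *)
Record seq_congruence (T : eqType) (W : T -> Prop) (E : seq T -> seq T -> Prop) := {
  congr_refl : forall u, {in u, forall p, W p} -> E u u;
  congr_sym : forall u v, E u v -> E v u;
  congr_trans : forall u v w, E u v -> E v w -> E u w;
  congr_cat : forall u1 v1 u2 v2, E u1 v1 -> E u2 v2 -> E (u1 ++ u2) (v1 ++ v2);
  congr_catC : forall u v, {in u, forall p, W p} -> {in v, forall p, W p} ->
    E (u ++ v) (v ++ u) }.

Section SeqCongruenceTheory.
Variables (T : eqType) (W : T -> Prop) (E : seq T -> seq T -> Prop).
Hypothesis hE : seq_congruence W E.

Lemma congr_nil : E [::] [::].
Proof. by apply: (congr_refl hE). Qed.

Lemma congr_perm u v : {in u, forall p, W p} -> perm_eq u v -> E u v.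
Proof.
elim: u v => [|x u IH] v Wu pe.
  by move: pe; rewrite perm_sym => /perm_nilP ->; apply: congr_nil.
have xv : x \in v by rewrite -(perm_mem pe) mem_head.
case/splitPr: xv pe => v1 v2 pe; have Wx : W x by apply: Wu; rewrite mem_head.
have Wu' : {in u, forall p, W p} by move=> p pu; apply: Wu; rewrite inE pu orbT.
have pe' : perm_eq u (v1 ++ v2).
  by rewrite -(perm_cons x) (perm_trans pe) // -cat1s perm_catCA.
have W12 : {in v1 ++ v2, forall p, W p} by move=> p; rewrite -(perm_mem pe'); apply: Wu'.
have W1 : {in v1, forall p, W p} by move=> p p1; apply: W12; rewrite mem_cat p1.
have Wx1 : {in [:: x], forall p, W p} by move=> p; rewrite inE => /eqP ->.
apply: (congr_trans hE (_ : E _ ([:: x] ++ v1 ++ v2))).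
  by apply: (congr_cat hE (congr_refl hE Wx1)); apply: IH.
have W2 : {in v2, forall p, W p} by move=> p p2; apply: W12; rewrite mem_cat p2 orbT.
rewrite catA -[x :: v2]cat1s catA.
by apply: (congr_cat hE); [apply: (congr_catC hE) | apply: (congr_refl hE)].
Qed.

Lemma congr_flatten_map (X : eqType) (f g : X -> seq T) w :
  {in w, forall x, E (f x) (g x)} -> E (flatten (map f w)) (flatten (map g w)).
Proof.
elim: w => [|x w IH] h /=; first exact: congr_nil.
apply: (congr_cat hE); first by apply: h; rewrite mem_head.
by apply: IH => y yw; apply: h; rewrite inE yw orbT.
Qed.

Lemma congr_map (X : eqType) (F G : X -> T) w :
  (forall x, E [:: F x] [:: G x]) -> E (map F w) (map G w).
Proof.
by move=> h; rewrite -(flatten_map1 F) -(flatten_map1 G); apply: congr_flatten_map.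
Qed.

Lemma congr_map_nil (X : Type) (F : X -> T) w :
  (forall x, E [:: F x] [::]) -> E (map F w) [::].
Proof.
move=> h; elim: w => [|x w IH] /=; first exact: congr_nil.
by rewrite -cat1s -[[::]]cat0s; apply: (congr_cat hE).
Qed.

Lemma congr_map_split (X : eqType) (F G1 G2 : X -> T) w :
  (forall x, W (G1 x) /\ W (G2 x)) ->
  (forall x, E [:: F x] [:: G1 x; G2 x]) -> E (map F w) (map G1 w ++ map G2 w).
Proof.
move=> hW h; apply: (congr_trans hE (_ : E _ (flatten [seq [:: G1 x] ++ [:: G2 x] | x <- w]))).
  by rewrite -(flatten_map1 F); apply: congr_flatten_map.
apply: congr_perm; last by rewrite -(flatten_map1 G1) -(flatten_map1 G2) perm_flatten_map_cat.
by move=> p /flatten_mapP [x _]; rewrite !inE => /orP [] /eqP ->; case: (hW x).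
Qed.

End SeqCongruenceTheory.

Lemma tens_eq_congruence (k : fieldType) (A : Type) (L R : lmodType k)
    (ra : L -> A -> L) (la : A -> R -> R) (P : L -> Prop) (Q : R -> Prop)
    (Z : L -> Prop) :
  seq_congruence (fun p => P p.1 /\ Q p.2) (tens_eq ra la P Q Z).
Proof.
by split; [exact: te_refl | exact: te_sym | exact: te_trans | exact: te_cat
          | exact: te_comm].
Qed.

Lemma tens3_eq_congruence (k : fieldType) (A : Type) (L M R : lmodType k)
    (r1 : L -> A -> L) (l2 : A -> M -> M) (r2 : M -> A -> M) (l3 : A -> R -> R)
    (P1 : L -> Prop) :
  seq_congruence (fun p => P1 p.1.1) (tens3_eq r1 l2 r2 l3 P1).
Proof.
by split; [exact: t3_refl | exact: t3_sym | exact: t3_trans | exact: t3_cat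
          | exact: t3_comm].
Qed.

Section TensEqUniversal.
Variables (k : fieldType) (A : Type) (L R : lmodType k) (ra : L -> A -> L)
  (la : A -> R -> R) (P : L -> Prop) (Q : R -> Prop) (Z : L -> Prop).
Variables (T : eqType) (W : T -> Prop) (E : seq T -> seq T -> Prop)
  (f : L * R -> seq T).
Hypothesis hE : seq_congruence W E.
Hypothesis f_W : forall p, P p.1 -> Q p.2 -> {in f p, forall q, W q}.
Hypotheses
 (f_addl : forall x x' y, P x -> P x' -> Q y ->
    E (f (x + x', y)) (f (x, y) ++ f (x', y)))
 (f_addr : forall x y y', P x -> Q y -> Q y' ->
    E (f (x, y + y')) (f (x, y) ++ f (x, y')))
 (f_scal : forall c x y, P x -> Q y -> E (f (c *: x, y)) (f (x, c *: y)))
 (f_zero : forall y, P 0 -> Q y -> E (f (0, y)) [::])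
 (f_bal : forall a x y, P x -> Q y -> P (ra x a) -> Q (la a y) ->
    E (f (ra x a, y)) (f (x, la a y)))
 (f_kill : forall z y, P z -> Z z -> Q y -> E (f (z, y)) [::]).

Lemma tens_eq_flatten_map u v :
  tens_eq ra la P Q Z u v -> E (flatten (map f u)) (flatten (map f v)).
Proof.
have fW w : wf2 P Q w -> {in flatten (map f w), forall q, W q}.
  by move=> hw q /flatten_mapP [p /hw [Pp Qp]]; apply: f_W.
elim=> {u v}.
- by move=> w hw; apply: (congr_refl hE); apply: fW.
- by move=> u v _; apply: (congr_sym hE).
- by move=> u v w _ huv _; apply: (congr_trans hE).
- by move=> u1 v1 u2 v2 _ h1 _ h2; rewrite !map_cat !flatten_cat; apply: (congr_cat hE).
- by move=> u v hu hv; rewrite !map_cat !flatten_cat; apply: (congr_catC hE); apply: fW.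
- by move=> *; rewrite /= !cats0; apply: f_addl.
- by move=> *; rewrite /= !cats0; apply: f_addr.
- by move=> *; rewrite /= !cats0; apply: f_scal.
- by move=> *; rewrite /= cats0; apply: f_zero.
- by move=> *; rewrite /= !cats0; apply: f_bal.
- by move=> *; rewrite /= cats0; apply: f_kill.
Qed.
End TensEqUniversal.

Section Tens3EqUniversal.
Variables (k : fieldType) (A : Type) (L M R : lmodType k)
  (r1 : L -> A -> L) (l2 : A -> M -> M) (r2 : M -> A -> M) (l3 : A -> R -> R)
  (P1 : L -> Prop).
Variables (T : eqType) (W : T -> Prop) (E : seq T -> seq T -> Prop)
  (f : L * M * R -> seq T).
Hypothesis hE : seq_congruence W E.
Hypothesis f_W : forall p, P1 p.1.1 -> {in f p, forall q, W q}.
Hypotheses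
 (f_add1 : forall x x' y z, P1 x -> P1 x' ->
    E (f (x + x', y, z)) (f (x, y, z) ++ f (x', y, z)))
 (f_add2 : forall x y y' z, P1 x -> E (f (x, y + y', z)) (f (x, y, z) ++ f (x, y', z)))
 (f_add3 : forall x y z z', P1 x -> E (f (x, y, z + z')) (f (x, y, z) ++ f (x, y, z')))
 (f_scal12 : forall c x y z, P1 x -> E (f (c *: x, y, z)) (f (x, c *: y, z)))
 (f_scal23 : forall c x y z, P1 x -> E (f (x, c *: y, z)) (f (x, y, c *: z)))
 (f_zero : forall y z, P1 0 -> E (f (0, y, z)) [::])
 (f_bal12 : forall a x y z, P1 x -> P1 (r1 x a) ->
    E (f (r1 x a, y, z)) (f (x, l2 a y, z)))
 (f_bal23 : forall a x y z, P1 x -> E (f (x, r2 y a, z)) (f (x, y, l3 a z))).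

Lemma tens3_eq_flatten_map u v :
  tens3_eq r1 l2 r2 l3 P1 u v -> E (flatten (map f u)) (flatten (map f v)).
Proof.
have fW w : wf3 P1 w -> {in flatten (map f w), forall q, W q}.
  by move=> hw q /flatten_mapP [p /hw P1p]; apply: f_W.
elim=> {u v}.
- by move=> w hw; apply: (congr_refl hE); apply: fW.
- by move=> u v _; apply: (congr_sym hE).
- by move=> u v w _ huv _; apply: (congr_trans hE).
- by move=> u1 v1 u2 v2 _ h1 _ h2; rewrite !map_cat !flatten_cat; apply: (congr_cat hE).
- by move=> u v hu hv; rewrite !map_cat !flatten_cat; apply: (congr_catC hE); apply: fW.
- by move=> *; rewrite /= !cats0; apply: f_add1.
- by move=> *; rewrite /= !cats0; apply: f_add2.
- by move=> *; rewrite /= !cats0; apply: f_add3.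
- by move=> *; rewrite /= !cats0; apply: f_scal12.
- by move=> *; rewrite /= !cats0; apply: f_scal23.
- by move=> *; rewrite /= cats0; apply: f_zero.
- by move=> *; rewrite /= !cats0; apply: f_bal12.
- by move=> *; rewrite /= !cats0; apply: f_bal23.
Qed.
End Tens3EqUniversal.

Definition scale_fst (k : fieldType) (L : lmodType k) (R : Type) (c : k)
    (u : seq (L * R)) := [seq (c *: p.1, p.2) | p <- u].
Definition opp_fst (k : fieldType) (L : lmodType k) (R : Type) (u : seq (L * R)) :=
  [seq (- p.1, p.2) | p <- u].
Definition mul_snd (L : Type) (H : pzRingType) (h : H) (u : seq (L * H)) :=
  [seq (p.1, h * p.2) | p <- u].

Lemma scale_fst1 (k : fieldType) (L : lmodType k) (R : Type) (u : seq (L * R)) : scale_fst 1 u = u.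
Proof. by elim: u => //= [[x y] u] ->; rewrite scale1r. Qed.

Lemma tens_eq_sub (k : fieldType) (A : Type) (L R : lmodType k) (ra : L -> A -> L)
    (la : A -> R -> R) (P P' : L -> Prop) (Q Q' : R -> Prop) (Z Z' : L -> Prop) u v :
  (forall x, P x -> P' x) -> (forall y, Q y -> Q' y) -> (forall x, Z x -> Z' x) ->
  tens_eq ra la P Q Z u v -> tens_eq ra la P' Q' Z' u v.
Proof.
move=> hP hQ hZ; elim=> {u v}; try by econstructor; eauto.
by move=> w hw; apply: te_refl => p /hw [] /hP ? /hQ.
by move=> u v hu hv; apply: te_comm => p; [move/hu | move/hv] => [] [/hP ? /hQ].
Qed.

Section FullTensEq.
Variables (k : fieldType) (A : Type) (L R : lmodType k) (ra : L -> A -> L)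
  (la : A -> R -> R) (Z : L -> Prop).
Local Notation TE := (tens_eq ra la (fun _ : L => True) (fun _ : R => True) Z).

Lemma full_tens_eq_congruence : seq_congruence (fun _ => True) TE.
Proof.
by split; [move=> u _; apply: te_refl | exact: te_sym | exact: te_trans
          | exact: te_cat | move=> u v _ _; apply: te_comm].
Qed.

Lemma tens_eq_refl u : TE u u.
Proof. exact: (congr_refl full_tens_eq_congruence). Qed.

Lemma tens_eq_catC u v : TE (u ++ v) (v ++ u).
Proof. exact: (congr_catC full_tens_eq_congruence). Qed.

Lemma tens_eq_perm u v : perm_eq u v -> TE u v.
Proof. exact: (congr_perm full_tens_eq_congruence). Qed.

Lemma tens_eq_catl w u v : TE u v -> TE (w ++ u) (w ++ v).
Proof. by apply: te_cat; apply: tens_eq_refl. Qed.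

Lemma tens_eq_catr w u v : TE u v -> TE (u ++ w) (v ++ w).
Proof. by move=> h; apply: te_cat h (tens_eq_refl w). Qed.

Lemma tens_eq_zero_snd x : TE [:: (x, 0)] [::].
Proof.
apply: (te_trans (s2 := [:: (0 *: x, 0)])).
  by rewrite -{1}(scale0r (0 : R)); apply: te_sym; apply: te_scal.
by rewrite scale0r; apply: te_zero.
Qed.

Lemma tens_eq_addNr u : TE (u ++ opp_fst u) [::].
Proof.
elim: u => [|[x y] u IH] /=; first exact: tens_eq_refl.
apply: (te_trans (s2 := [:: (x, y); (- x, y)] ++ (u ++ opp_fst u))).
  by apply: tens_eq_perm; rewrite /= perm_cons -cat1s perm_catCA.
rewrite -[[::]]cats0; apply: te_cat IH.
by apply: (te_trans (s2 := [:: (x - x, y)])); [apply: te_sym; apply: te_addl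
  | rewrite subrr; apply: te_zero].
Qed.

Lemma tens_eq_cancel w u v : TE (u ++ w) (v ++ w) -> TE u v.
Proof.
move=> h; apply: (te_trans (s2 := u ++ (w ++ opp_fst w))).
  by rewrite -{1}[u]cats0; apply: tens_eq_catl; apply: te_sym; apply: tens_eq_addNr.
apply: (te_trans (s2 := v ++ (w ++ opp_fst w))); first by rewrite !catA; apply: tens_eq_catr.
by rewrite -{2}[v]cats0; apply: tens_eq_catl; apply: tens_eq_addNr.
Qed.

Lemma tens_eq_scaleDl c d u :
  TE (scale_fst (c + d) u) (scale_fst c u ++ scale_fst d u).
Proof.
elim: u => [|[x y] u IH] /=; first exact: tens_eq_refl.
apply: (te_trans (s2 := [:: (c *: x, y); (d *: x, y)] ++ (scale_fst c u ++ scale_fst d u))).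
  by rewrite -cat1s; apply: te_cat IH; rewrite scalerDl; apply: te_addl.
by apply: tens_eq_perm; rewrite /= perm_cons -cat1s perm_catCA.
Qed.

Hypothesis la_scale : forall a (c : k) y, la a (c *: y) = c *: la a y.

Lemma tens_eq_scale c u v : TE u v -> TE (scale_fst c u) (scale_fst c v).
Proof.
rewrite /scale_fst -(flatten_map1 _ u) -(flatten_map1 _ v).
apply: (tens_eq_flatten_map full_tens_eq_congruence) => //=.
- by move=> x x' y _ _ _; rewrite scalerDr; apply: te_addl.
- by move=> x y y' _ _ _; apply: te_addr.
- by move=> d x y _ _; rewrite scalerA mulrC -scalerA; apply: te_scal.
- by move=> y _ _; rewrite scaler0; apply: te_zero.
- move=> a x y _ _ _ _; apply: (te_trans (s2 := [:: (ra x a, c *: y)])); first exact: te_scal.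
  apply: (te_trans (s2 := [:: (x, la a (c *: y))])); first exact: te_bal.
  by rewrite la_scale; apply: te_sym; apply: te_scal.
- move=> z y _ hz _; apply: (te_trans (s2 := [:: (z, c *: y)])); first exact: te_scal.
  exact: te_kill.
Qed.

End FullTensEq.

Arguments tens_eq_refl {k A L R ra la Z}.
Arguments tens_eq_catC {k A L R ra la Z}.
Arguments tens_eq_perm {k A L R ra la Z} [u v].
Arguments tens_eq_catl {k A L R ra la Z} w [u v].
Arguments tens_eq_catr {k A L R ra la Z} w [u v].
Arguments tens_eq_zero_snd {k A L R ra la Z}.
Arguments tens_eq_addNr {k A L R ra la Z}.
Arguments tens_eq_cancel {k A L R ra la Z} w [u v].
Arguments tens_eq_scaleDl {k A L R ra la Z}.

Definition subspace (k : fieldType) (V : lmodType k) (B : V -> Prop) :=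
  B 0 /\ forall (c : k) x y, B x -> B y -> B (c *: x + y).

Definition subspace_pred (k : fieldType) (V : lmodType k) (B : V -> Prop)
  (hB : subspace B) : {pred V} := fun x => `[< B x >].

Lemma subspace_submod_closed (k : fieldType) (V : lmodType k) (B : V -> Prop)
  (hB : subspace B) : submod_closed (subspace_pred hB).
Proof.
split; first by apply/asboolP; case: hB.
by move=> c x y /asboolP hx /asboolP hy; apply/asboolP; case: hB => _; apply.
Qed.

HB.instance Definition _ (k : fieldType) (V : lmodType k) (B : V -> Prop)
  (hB : subspace B) := GRing.isSubmodClosed.Build k V (subspace_pred hB)
  (subspace_submod_closed hB).

Notation subspace_type hB := {x | x \in subspace_pred hB}.

HB.instance Definition _ (k : fieldType) (V : lmodType k) (B : V -> Prop)
  (hB : subspace B) := [SubChoice_isSubLmodule of subspace_type hB by <:].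

Section Subspace.
Variables (k : fieldType) (V : lmodType k) (B : V -> Prop) (hB : subspace B).

Lemma subspace_valP (x : subspace_type hB) : B (val x).
Proof. by have /asboolP := valP x. Qed.

Lemma subspace_valK (x : V) : B x -> val (insubd 0 x : subspace_type hB) = x.
Proof. by move=> hx; rewrite insubdK //; apply/asboolP. Qed.

Lemma subspaceZ c x : B x -> B (c *: x).
Proof. by move=> hx; rewrite -[c *: x]addr0; apply: hB.2 => //; exact: hB.1. Qed.

Lemma subspaceN x : B x -> B (- x).
Proof. by move=> hx; rewrite -scaleN1r; apply: subspaceZ. Qed.

Variables (A : algType k) (rV : V -> A -> V) (hr : forall x a, B x -> B (rV x a)).

Definition subspace_ract (x : subspace_type hB) (a : A) : subspace_type hB :=
  Sub (rV (val x) a) (asboolT (hr a (subspace_valP x))).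

Lemma subspace_right_Amod : right_Amod rV -> right_Amod subspace_ract.
Proof.
case=> rD1 rD2 rM r1 rZ; split.
- by move=> x y a; apply: val_inj; rewrite /= rD1.
- by move=> x a b; apply: val_inj; rewrite /= rD2.
- by move=> x a b; apply: val_inj; rewrite /= rM.
- by move=> x; apply: val_inj; rewrite /= r1.
- by move=> c x a; have [e1 e2] := rZ c (val x) a; split; apply: val_inj; rewrite /= ?e1 ?e2.
Qed.
End Subspace.

Section KLinearMap.
Variables (k : fieldType) (U V : lmodType k) (f : U -> V).
Hypothesis f_lin : forall (c : k) x y, f (c *: x + y) = c *: f x + f y.

Lemma klinear0 : f 0 = 0.
Proof.
have := f_lin 1 0 0; rewrite !scale1r addr0 => e.
by apply: (addrI (f 0)); rewrite addr0 -e.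
Qed.

Lemma klinearD x y : f (x + y) = f x + f y.
Proof. by have := f_lin 1 x y; rewrite !scale1r. Qed.

Lemma klinearZ c x : f (c *: x) = c *: f x.
Proof. by have := f_lin c x 0; rewrite !addr0 klinear0 addr0. Qed.
End KLinearMap.

Section TensorQuotient.
Variables (k : fieldType) (A H : algType k) (s : A -> H) (L : lmodType k)
  (ra : L -> A -> L) (Z : L -> Prop).
Local Notation TE := (tens_eq ra (Hl s) (fun _ : L => True) (@allH k H) Z).

(* The k-space (L/Z) (x)_A H, as the set of [TE]-classes of formal sums. *)
Record tensor := Tensor {
  tensor_class : seq (L * H) -> Prop;
  tensor_classP : exists u, tensor_class = TE u }.

Definition tclass (u : seq (L * H)) : tensor := Tensor (ex_intro _ u erefl).
Definition trep (X : tensor) : seq (L * H) := proj1_sig (cid (tensor_classP X)).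

Lemma tensor_ext (X Y : tensor) : tensor_class X = tensor_class Y -> X = Y.
Proof.
by case: X Y => c1 h1 [c2 h2] /= e; subst; rewrite (Prop_irrelevance h1 h2).
Qed.

Lemma tclassP u v : tclass u = tclass v <-> TE u v.
Proof.
split=> [/(congr1 tensor_class) /= -> | h]; first exact: tens_eq_refl.
apply: tensor_ext; apply/funext => w /=; apply/propext.
by split; apply: te_trans; [apply: te_sym |].
Qed.

Lemma trepK X : tclass (trep X) = X.
Proof. by apply: tensor_ext; rewrite /trep; case: (cid _) => u /= ->. Qed.

Lemma trep_tclass u : TE (trep (tclass u)) u.
Proof. by apply/tclassP; rewrite trepK. Qed.

Lemma tensor_ind (P : tensor -> Prop) : (forall u, P (tclass u)) -> forall X, P X.
Proof. by move=> h X; rewrite -(trepK X). Qed.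

Lemma Hl_scale a (c : k) (y : H) : Hl s a (c *: y) = c *: Hl s a y.
Proof. by rewrite /Hl scalerAr. Qed.

Definition tensor_add X Y := tclass (trep X ++ trep Y).
Definition tensor_opp X := tclass (opp_fst (trep X)).
Definition tensor_zero := tclass [::].
Definition tensor_scale (c : k) X := tclass (scale_fst c (trep X)).

Lemma tensor_addE u v : tensor_add (tclass u) (tclass v) = tclass (u ++ v).
Proof. by apply/tclassP; apply: te_cat; apply: trep_tclass. Qed.

Lemma tensor_scaleE c u : tensor_scale c (tclass u) = tclass (scale_fst c u).
Proof. by apply/tclassP; apply: tens_eq_scale; [exact: Hl_scale | apply: trep_tclass]. Qed.

Lemma tensor_addA : associative tensor_add.
Proof.
by elim/tensor_ind => a; elim/tensor_ind => b; elim/tensor_ind => c;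
  rewrite !tensor_addE catA.
Qed.

Lemma tensor_addC : commutative tensor_add.
Proof.
by elim/tensor_ind => a; elim/tensor_ind => b; rewrite !tensor_addE; apply/tclassP;
  apply: tens_eq_catC.
Qed.

Lemma tensor_add0 : left_id tensor_zero tensor_add.
Proof. by elim/tensor_ind => a; rewrite tensor_addE. Qed.

Lemma tensor_addN : left_inverse tensor_zero tensor_opp tensor_add.
Proof.
elim/tensor_ind => a; rewrite tensor_addE; apply/tclassP.
apply: te_trans (tens_eq_catC _ _) _.
apply: te_trans (tens_eq_addNr (trep (tclass a))).
by apply: tens_eq_catr; apply: te_sym; apply: trep_tclass.
Qed.

Lemma tensor_scaleA a b X : tensor_scale a (tensor_scale b X) = tensor_scale (a * b) X.
Proof.
elim/tensor_ind: X => u; rewrite !tensor_scaleE /scale_fst -map_comp.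
by congr tclass; apply: eq_map => p /=; rewrite scalerA.
Qed.

Lemma tensor_scale1 : left_id 1 tensor_scale.
Proof.
elim/tensor_ind => u; rewrite tensor_scaleE /scale_fst.
by congr tclass; elim: u => //= [[x y] u] ->; rewrite scale1r.
Qed.

Lemma tensor_scaleDr : right_distributive tensor_scale tensor_add.
Proof.
move=> c; elim/tensor_ind => a; elim/tensor_ind => b.
by rewrite tensor_addE !tensor_scaleE tensor_addE /scale_fst map_cat.
Qed.

Lemma tensor_scaleDl X : {morph tensor_scale^~ X : a b / a + b >-> tensor_add a b}.
Proof.
move=> a b; elim/tensor_ind: X => u.
by rewrite !tensor_scaleE tensor_addE; apply/tclassP; apply: tens_eq_scaleDl.
Qed.

End TensorQuotient.

HB.instance Definition _ (k : fieldType) (A H : algType k) (s : A -> H)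
    (L : lmodType k) (ra : L -> A -> L) (Z : L -> Prop) :=
  gen_eqMixin (tensor s ra Z).
HB.instance Definition _ (k : fieldType) (A H : algType k) (s : A -> H)
    (L : lmodType k) (ra : L -> A -> L) (Z : L -> Prop) :=
  gen_choiceMixin (tensor s ra Z).
HB.instance Definition _ (k : fieldType) (A H : algType k) (s : A -> H)
    (L : lmodType k) (ra : L -> A -> L) (Z : L -> Prop) :=
  GRing.isZmodule.Build (tensor s ra Z)
    (@tensor_addA k A H s L ra Z) (@tensor_addC k A H s L ra Z)
    (@tensor_add0 k A H s L ra Z) (@tensor_addN k A H s L ra Z).
HB.instance Definition _ (k : fieldType) (A H : algType k) (s : A -> H)
    (L : lmodType k) (ra : L -> A -> L) (Z : L -> Prop) :=
  GRing.Zmodule_isLmodule.Build k (tensor s ra Z)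
    (@tensor_scaleA k A H s L ra Z) (@tensor_scale1 k A H s L ra Z)
    (@tensor_scaleDr k A H s L ra Z) (@tensor_scaleDl k A H s L ra Z).

Section TensorTheory.
Variables (k : fieldType) (A H : algType k) (s : A -> H) (L : lmodType k)
  (ra : L -> A -> L) (Z : L -> Prop).
Local Notation tclass := (@tclass k A H s L ra Z).

Lemma tclassD u v : tclass u + tclass v = tclass (u ++ v).
Proof. exact: tensor_addE. Qed.

Lemma tclass0 : tclass [::] = 0.
Proof. by []. Qed.

Lemma tclassZ c u : c *: tclass u = tclass (scale_fst c u).
Proof. exact: tensor_scaleE. Qed.

Lemma tclassN u : - tclass u = tclass (opp_fst u).
Proof.
apply: (addrI (tclass u)); rewrite subrr tclassD -tclass0; apply/tclassP.
by apply: te_sym; apply: tens_eq_addNr.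
Qed.
End TensorTheory.

Section RightActions.
Variables (k : fieldType) (A H : algType k) (s t : A -> H).
Hypotheses (ht : kalg_antimap t) (hst : forall a b, s a * t b = t b * s a).

Lemma Hr_right_Amod : right_Amod (Hr t).
Proof.
case: ht => t_lin t1 tM; rewrite /Hr; split.
- by move=> x y a; rewrite mulrDr.
- by move=> x a b; rewrite klinearD // mulrDl.
- by move=> x a b; rewrite mulrA tM.
- by move=> x; rewrite t1 mul1r.
- by move=> c x a; split; [rewrite scalerAr | rewrite klinearZ // -scalerAl].
Qed.

Lemma tens_eq_mulr (Z : H -> Prop) (y z : H) u v :
  (forall x, Z x -> Z (x * y)) ->
  tens_eq (Hr t) (Hl s) (fun _ => True) (fun _ => True) Z u v ->
  tens_eq (Hr t) (Hl s) (fun _ => True) (fun _ => True) Z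
    [seq (p.1 * y, p.2 * z) | p <- u] [seq (p.1 * y, p.2 * z) | p <- v].
Proof.
move=> hZ; rewrite -(flatten_map1 _ u) -(flatten_map1 _ v).
apply: (tens_eq_flatten_map (full_tens_eq_congruence _ _ _)) => //=.
- by move=> *; rewrite mulrDl; apply: te_addl.
- by move=> *; rewrite mulrDl; apply: te_addr.
- by move=> *; rewrite -!scalerAl; apply: te_scal.
- by move=> *; rewrite mul0r; apply: te_zero.
- by move=> *; rewrite /Hr /Hl -!mulrA; apply: te_bal.
- by move=> *; apply: te_kill; auto.
Qed.

Variables (L : lmodType k) (ra : L -> A -> L) (Z : L -> Prop).
Local Notation TE := (tens_eq ra (Hl s) (fun _ : L => True) (@allH k H) Z).

Lemma tens_eq_mul_snd (h : H) u v :
  (forall a, s a * h = h * s a) -> TE u v -> TE (mul_snd h u) (mul_snd h v).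
Proof.
move=> hh; rewrite /mul_snd -(flatten_map1 _ u) -(flatten_map1 _ v).
apply: (tens_eq_flatten_map (full_tens_eq_congruence _ _ _)) => //=.
- by move=> *; apply: te_addl.
- by move=> *; rewrite mulrDr; apply: te_addr.
- by move=> *; rewrite -scalerAr; apply: te_scal.
- by move=> *; apply: te_zero.
- by move=> *; rewrite /Hl mulrA -hh -mulrA; apply: te_bal.
- by move=> *; apply: te_kill.
Qed.

Local Notation tclass := (@tclass k A H s L ra Z).

Definition tensor_ract (X : tensor s ra Z) (a : A) := tclass (mul_snd (t a) (trep X)).

Lemma tensor_ractE u a : tensor_ract (tclass u) a = tclass (mul_snd (t a) u).
Proof. by apply/tclassP; apply: tens_eq_mul_snd => //; apply: trep_tclass. Qed.

Lemma tensor_right_Amod : right_Amod tensor_ract.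
Proof.
case: ht => t_lin t1 tM; split.
- elim/tensor_ind => u; elim/tensor_ind => v a.
  by rewrite tclassD !tensor_ractE tclassD /mul_snd map_cat.
- elim/tensor_ind => u a b; rewrite !tensor_ractE tclassD; apply/tclassP.
  elim: u => [|[x y] u IH] /=; first exact: tens_eq_refl.
  apply: (te_trans (s2 := [:: (x, t a * y); (x, t b * y)] ++ (mul_snd (t a) u ++ mul_snd (t b) u))).
    by rewrite -cat1s; apply: te_cat IH; rewrite klinearD // mulrDl; apply: te_addr.
  by apply: tens_eq_perm; rewrite /= perm_cons -cat1s perm_catCA.
- elim/tensor_ind => u a b; rewrite !tensor_ractE /mul_snd -map_comp.
  by congr tclass; apply: eq_map => p /=; rewrite mulrA tM.
- elim/tensor_ind => u; rewrite tensor_ractE /mul_snd t1.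
  by congr tclass; elim: u => //= [[x y] u] ->; rewrite mul1r.
- move=> c; elim/tensor_ind => u a; rewrite tclassZ !tensor_ractE tclassZ.
  split; first by congr tclass; rewrite /mul_snd /scale_fst -!map_comp.
  rewrite /mul_snd /scale_fst -map_comp; apply/tclassP.
  apply: (congr_map (full_tens_eq_congruence _ _ _)) => p /=.
  by rewrite klinearZ // -scalerAl; apply: te_sym; apply: te_scal.
Qed.
End RightActions.

Section LeftBialgebroid.
Variables (k : fieldType) (A H : algType k) (s t : A -> H)
  (Delta : H -> seq (H * H)) (eps : H -> A).
Hypothesis hbi : left_bialgebroid s t Delta eps.
Local Notation HH := (teqHH s t).

Lemma t_antimap : kalg_antimap t.
Proof. by case: hbi => [[]]. Qed.

Lemma st_comm a b : s a * t b = t b * s a.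
Proof. by case: hbi => [[]]. Qed.

Lemma s1 : s 1 = 1.
Proof. by case: hbi => [[[]]]. Qed.

Lemma t1 : t 1 = 1.
Proof. by case: t_antimap. Qed.

Lemma tM x y : t (x * y) = t y * t x.
Proof. by case: t_antimap. Qed.

Lemma tD x y : t (x + y) = t x + t y.
Proof. by case: t_antimap => t_lin _ _; apply: klinearD. Qed.

Lemma tZ c x : t (c *: x) = c *: t x.
Proof. by case: t_antimap => t_lin _ _; apply: klinearZ. Qed.

Lemma Delta_lin c x y : HH (Delta (c *: x + y)) (scale_fst c (Delta x) ++ Delta y).
Proof. by case: hbi => _ []. Qed.

Lemma Delta_bil a b h :
  HH (Delta (s a * t b * h)) [seq (s a * p.1, t b * p.2) | p <- Delta h].
Proof. by case: hbi => _ []. Qed.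

Lemma coassoc x : teqB3 s t (@allH k H)
  (flatten [seq [seq (q.1, q.2, p.2) | q <- Delta p.1] | p <- Delta x])
  (flatten [seq [seq (p.1, q.1, q.2) | q <- Delta p.2] | p <- Delta x]).
Proof. by case: hbi => _ [_ _ _ _ []]. Qed.

Lemma counit_r x : \sum_(p <- Delta x) t (eps p.2) * p.1 = x.
Proof. by case: hbi => _ [_ _ _ _ []]. Qed.

Lemma Delta_takeuchi x a :
  HH [seq (p.1 * t a, p.2) | p <- Delta x] [seq (p.1, p.2 * s a) | p <- Delta x].
Proof. by case: hbi => _ _ []. Qed.

Lemma DeltaM x y : HH (Delta (x * y))
  (flatten [seq [seq (p.1 * q.1, p.2 * q.2) | q <- Delta y] | p <- Delta x]).
Proof. by case: hbi => _ _ []. Qed.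

Lemma Delta1 : HH (Delta 1) [:: (1, 1)].
Proof. by case: hbi => _ _ []. Qed.

Lemma eps_lin c x y : eps (c *: x + y) = c *: eps x + eps y.
Proof. by case: hbi => _ []. Qed.

Lemma epsD x y : eps (x + y) = eps x + eps y.
Proof. exact/klinearD/eps_lin. Qed.

Lemma epsZ c x : eps (c *: x) = c *: eps x.
Proof. exact/klinearZ/eps_lin. Qed.

Lemma eps_mul_s a h : eps (s a * h) = a * eps h.
Proof.
case: hbi => _ [_ _ _ eps_bil _] _.
by have := eps_bil a 1 h; rewrite t1 !mulr1.
Qed.

Lemma DeltaD x y : HH (Delta (x + y)) (Delta x ++ Delta y).
Proof. by have := Delta_lin 1 x y; rewrite scale1r scale_fst1. Qed.

Lemma Delta0 : HH (Delta 0) [::].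
Proof.
apply: te_sym; apply: (tens_eq_cancel (Delta 0)).
by have := DeltaD 0 0; rewrite addr0.
Qed.

Lemma DeltaZ c x : HH (Delta (c *: x)) (scale_fst c (Delta x)).
Proof.
have := Delta_lin c x 0; rewrite addr0 => h; apply: te_trans h _.
by rewrite -{2}[scale_fst c _]cats0; apply: tens_eq_catl; apply: Delta0.
Qed.

Lemma Delta_mul_s a h : HH (Delta (s a * h)) [seq (s a * p.1, p.2) | p <- Delta h].
Proof.
have := Delta_bil a 1 h; rewrite t1 mulr1 => e; apply: te_trans e _.
by under eq_map do rewrite mul1r; apply: tens_eq_refl.
Qed.

Lemma Delta_mul_t a h : HH (Delta (t a * h)) (mul_snd (t a) (Delta h)).
Proof.
have := Delta_bil 1 a h; rewrite s1 mul1r => e; apply: te_trans e _.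
by under eq_map do rewrite mul1r; apply: tens_eq_refl.
Qed.

End LeftBialgebroid.

Lemma coinv_mono (k : fieldType) (A H : algType k) (s t : A -> H)
    (Delta : H -> seq (H * H)) (I J : H -> Prop) :
  (forall x, I x -> J x) -> forall x, coinv s t Delta I x -> coinv s t Delta J x.
Proof. by move=> hIJ x; apply: tens_eq_sub. Qed.

Section Coinvariants.
Variables (k : fieldType) (A H : algType k) (s t : A -> H)
  (Delta : H -> seq (H * H)) (eps : H -> A).
Hypothesis hbi : left_bialgebroid s t Delta eps.
Variable I : H -> Prop.
Hypothesis hI : left_ideal_coideal s t Delta eps I.
Local Notation QQ := (teqQH s t I).
Local Notation B := (coinv s t Delta I).

Lemma teqQH_of_teqHH u v : teqHH s t u v -> QQ u v.
Proof. exact: tens_eq_sub. Qed.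

Lemma tens_eq_takeuchi_mull (w : seq (H * H)) u v :
  (forall a, teqHH s t [seq (p.1 * t a, p.2) | p <- w] [seq (p.1, p.2 * s a) | p <- w]) ->
  QQ u v ->
  QQ (flatten [seq [seq (p.1 * q.1, p.2 * q.2) | p <- w] | q <- u])
     (flatten [seq [seq (p.1 * q.1, p.2 * q.2) | p <- w] | q <- v]).
Proof.
move=> hw; case: hI => _ _ I_mull _ _.
have hQ := full_tens_eq_congruence (Hr t) (Hl s) I.
apply: (tens_eq_flatten_map hQ) => //.
- by move=> *; apply: (congr_map_split hQ) => // p; rewrite mulrDr; apply: te_addl.
- by move=> *; apply: (congr_map_split hQ) => // p; rewrite mulrDr; apply: te_addr.
- by move=> *; apply: (congr_map hQ) => p; rewrite -!scalerAr; apply: te_scal.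
- by move=> *; apply: (congr_map_nil hQ) => p; rewrite mulr0; apply: te_zero.
- move=> a y z _ _ _ _; apply: teqQH_of_teqHH.
  have mulr_pair (f : H * H -> H * H) :
      [seq (p.1 * y, p.2 * z) | p <- map f w] = [seq ((f p).1 * y, (f p).2 * z) | p <- w].
    by rewrite -map_comp.
  have := tens_eq_mulr (y := y) z (fun x : H => @id (noneH x)) (hw a); rewrite !mulr_pair /=.
  by under eq_map do rewrite -mulrA; under [X in _ _ X]eq_map do rewrite -mulrA.
- by move=> *; apply: (congr_map_nil hQ) => p; apply: te_kill => //; apply: I_mull.
Qed.

Lemma coinv0 : B 0.
Proof.
apply: te_trans (teqQH_of_teqHH (Delta0 hbi)) _.
by apply: te_sym; apply: tens_eq_zero_snd.
Qed.

Lemma coinv1 : B 1.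
Proof. exact/teqQH_of_teqHH/(Delta1 hbi). Qed.

Lemma coinv_lin c x y : B x -> B y -> B (c *: x + y).
Proof.
move=> hx hy; apply: te_trans (teqQH_of_teqHH (Delta_lin hbi c x y)) _.
apply: (te_trans (s2 := scale_fst c [:: (1, x)] ++ [:: (1, y)])).
  by apply: te_cat hy; apply: tens_eq_scale hx; exact: Hl_scale.
apply: (te_trans (s2 := [:: (1, c *: x)] ++ [:: (1, y)])).
  by apply: tens_eq_catr; apply: te_scal.
by apply: te_sym; apply: te_addr.
Qed.

Lemma coinv_t a : B (t a).
Proof.
apply: teqQH_of_teqHH; rewrite -[t a]mulr1.
apply: te_trans (Delta_mul_t hbi a 1) _.
exact: (tens_eq_mul_snd (fun b => st_comm hbi b a) (Delta1 hbi)).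
Qed.

Lemma coinv_mul x y : B x -> B y -> B (x * y).
Proof.
move=> hx hy; apply: te_trans (teqQH_of_teqHH (DeltaM hbi x y)) _.
have swap := perm_allpairs_swap (fun p q : H * H => (p.1 * q.1, p.2 * q.2)).
apply: te_trans (tens_eq_perm (swap _ _)) _.
apply: te_trans (tens_eq_takeuchi_mull (Delta_takeuchi hbi x) hy) _.
have I_mulr1 z : I z -> I (z * 1) by rewrite mulr1.
by have := tens_eq_mulr y I_mulr1 hx; rewrite /= cats0 !mulr1.
Qed.

Lemma coinv_ract x a : B x -> B (Hr t x a).
Proof. by move=> hx; apply: coinv_mul => //; apply: coinv_t. Qed.

Lemma coinv_subspace : subspace B.
Proof. by split; [exact: coinv0 | exact: coinv_lin]. Qed.

End Coinvariants.

Lemma tens_eq_mod_subspace (k : fieldType) (A : Type) (L R : lmodType k)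
    (ra : L -> A -> L) (la : A -> R -> R) (Z : L -> Prop) (hZ : subspace Z) u v :
  tens_eq ra la (fun _ => True) (fun _ => True) Z u v ->
  exists2 z, {in z, forall p, Z p.1} &
    tens_eq ra la (fun _ => True) (fun _ => True) (fun _ => False) u (v ++ z).
Proof.
have plain u' v' : tens_eq ra la (fun _ => True) (fun _ => True) (fun _ => False) u' v' ->
    exists2 z, {in z, forall p, Z p.1} &
      tens_eq ra la (fun _ => True) (fun _ => True) (fun _ => False) u' (v' ++ z).
  by move=> h; exists [::]; rewrite ?cats0.
elim=> {u v}.
- by move=> w _; apply: plain; apply: tens_eq_refl.
- move=> u v _ [z hz h]; exists (opp_fst z).
    by move=> p /mapP [q /hz ? ->]; apply: subspaceN.
  apply: (te_trans (s2 := v ++ (z ++ opp_fst z))).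
    by rewrite -{1}[v]cats0; apply: tens_eq_catl; apply: te_sym; apply: tens_eq_addNr.
  by rewrite catA; apply: tens_eq_catr; apply: te_sym.
- move=> u v w _ [z1 hz1 h1] _ [z2 hz2 h2]; exists (z2 ++ z1).
    by move=> p; rewrite mem_cat => /orP [/hz2|/hz1].
  by rewrite catA; apply: te_trans h1 _; apply: tens_eq_catr.
- move=> u1 v1 u2 v2 _ [z1 hz1 h1] _ [z2 hz2 h2]; exists (z1 ++ z2).
    by move=> p; rewrite mem_cat => /orP [/hz1|/hz2].
  apply: te_trans (te_cat h1 h2) _; apply: tens_eq_perm.
  by rewrite -!catA perm_cat2l perm_catCA.
- by move=> u v _ _; apply: plain; apply: tens_eq_catC.
- by move=> *; apply: plain; apply: te_addl.
- by move=> *; apply: plain; apply: te_addr.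
- by move=> *; apply: plain; apply: te_scal.
- by move=> *; apply: plain; apply: te_zero.
- by move=> *; apply: plain; apply: te_bal.
- move=> z y _ hz _; exists [:: (z, y)]; last exact: tens_eq_refl.
  by move=> p; rewrite inE => /eqP ->.
Qed.

Section TensorOverQuotient.
Variables (k : fieldType) (A H : algType k) (s t : A -> H)
  (Delta : H -> seq (H * H)) (eps : H -> A).
Hypothesis hbi : left_bialgebroid s t Delta eps.
Variable Z : H -> Prop.
Local Notation N := (tensor s (Hr t) Z).
Local Notation tc := (@tclass k A H s H (Hr t) Z).
Local Notation rN := (@tensor_ract k A H s t H (Hr t) Z).
Local Notation TN :=
  (tens_eq rN (Hl s) (fun _ : N => True) (fun _ : H => True) (fun _ => False)).

Lemma tclass_addl x x' y : tc [:: (x + x', y)] = tc [:: (x, y)] + tc [:: (x', y)].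
Proof. by rewrite tclassD; apply/tclassP; apply: te_addl. Qed.

Lemma tclass_addr x y y' : tc [:: (x, y + y')] = tc [:: (x, y)] + tc [:: (x, y')].
Proof. by rewrite tclassD; apply/tclassP; apply: te_addr. Qed.

Lemma tclass_scalel c x y : tc [:: (c *: x, y)] = c *: tc [:: (x, y)].
Proof. by rewrite tclassZ. Qed.

Lemma tclass_scaler c x y : tc [:: (x, c *: y)] = c *: tc [:: (x, y)].
Proof. by rewrite tclassZ; apply/tclassP; apply: te_sym; apply: te_scal. Qed.

Lemma tclass_zerol y : tc [:: (0, y)] = 0.
Proof. by apply/tclassP; apply: te_zero. Qed.

Lemma tclass_zeror x : tc [:: (x, 0)] = 0.
Proof. by apply/tclassP; apply: tens_eq_zero_snd. Qed.

Lemma tclass_bal a x y : tc [:: (t a * x, y)] = tc [:: (x, s a * y)].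
Proof. by apply/tclassP; apply: (te_bal (ra := Hr t) (la := Hl s)). Qed.

Lemma tclass_kill x y : Z x -> tc [:: (x, y)] = 0.
Proof. by move=> hx; apply/tclassP; apply: te_kill. Qed.

Lemma tclass_ract a x y : tc [:: (x, t a * y)] = rN (tc [:: (x, y)]) a.
Proof. by rewrite tensor_ractE //; apply: st_comm hbi. Qed.

Lemma tens_eq_tclass_split u y : TN [:: (tc u, y)] [seq (tc [:: p], y) | p <- u].
Proof.
elim: u => [|p u IH] /=; first exact: te_zero.
rewrite -[p :: u]cat1s -tclassD.
apply: (te_trans (s2 := [:: (tc [:: p], y); (tc u, y)])); first exact: te_addl.
exact: (tens_eq_catl [:: _] IH).
Qed.

Definition tclass_assoc (p : H * H * H) : N * H := (tc [:: (p.1.1, p.1.2)], p.2).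

Lemma tens3_eq_tclass_assoc u v :
  teqB3 s t (@allH k H) u v -> TN (map tclass_assoc u) (map tclass_assoc v).
Proof.
rewrite /tclass_assoc -(flatten_map1 _ u) -(flatten_map1 _ v).
apply: (tens3_eq_flatten_map (full_tens_eq_congruence _ _ _)) => //=.
- by move=> *; rewrite tclass_addl; apply: te_addl.
- by move=> *; rewrite tclass_addr; apply: te_addl.
- by move=> *; apply: te_addr.
- by move=> *; rewrite tclass_scalel tclass_scaler; apply: tens_eq_refl.
- by move=> *; rewrite tclass_scaler; apply: te_scal.
- by move=> *; rewrite tclass_zerol; apply: te_zero.
- by move=> *; rewrite /Hr tclass_bal; apply: tens_eq_refl.
- by move=> *; rewrite /Hr tclass_ract; apply: te_bal.
Qed.

Lemma tens_eq_tclass_fst x u v : teqHH s t u v ->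
  TN [seq (tc [:: (x, q.1)], q.2) | q <- u] [seq (tc [:: (x, q.1)], q.2) | q <- v].
Proof.
rewrite -(flatten_map1 _ u) -(flatten_map1 _ v).
apply: (tens_eq_flatten_map (full_tens_eq_congruence _ _ _)) => //=.
- by move=> *; rewrite tclass_addr; apply: te_addl.
- by move=> *; apply: te_addr.
- by move=> *; rewrite tclass_scaler; apply: te_scal.
- by move=> *; rewrite tclass_zeror; apply: te_zero.
- by move=> *; rewrite /Hr tclass_ract; apply: te_bal.
Qed.

Definition Delta_snd (p : H * H) : seq (N * H) :=
  [seq (tc [:: (p.1, q.1)], q.2) | q <- Delta p.2].

Lemma tens_eq_Delta_snd u v : teqQH s t Z u v ->
  TN (flatten (map Delta_snd u)) (flatten (map Delta_snd v)).
Proof.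
have hN := full_tens_eq_congruence rN (Hl s) (fun _ => False).
rewrite /Delta_snd; apply: (tens_eq_flatten_map hN) => //=.
- by move=> *; apply: (congr_map_split hN) => // q; rewrite tclass_addl; apply: te_addl.
- by move=> x y y' *; rewrite -map_cat; apply: tens_eq_tclass_fst; apply: (DeltaD hbi).
- move=> c x y *; apply: te_trans (te_sym (tens_eq_tclass_fst x (DeltaZ hbi c y))).
  rewrite /scale_fst -map_comp; apply: (congr_map hN) => q /=.
  by rewrite tclass_scalel tclass_scaler; apply: tens_eq_refl.
- by move=> *; apply: (congr_map_nil hN) => q; rewrite tclass_zerol; apply: te_zero.
- move=> a x y *; apply: te_trans (te_sym (tens_eq_tclass_fst x (Delta_mul_s hbi a y))).
  by rewrite -map_comp; apply: (congr_map hN) => q /=; rewrite tclass_bal; apply: tens_eq_refl.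
- by move=> x y *; apply: (congr_map_nil hN) => q; rewrite tclass_kill //; apply: te_zero.
Qed.

End TensorOverQuotient.

Lemma flat_subspace (k : fieldType) (A H : algType k) (s : A -> H) (V : lmodType k)
    (rV : V -> A -> V) (B : V -> Prop) (hB : subspace B)
    (hr : forall x a, B x -> B (rV x a)) (u v : seq (subspace_type hB * H)) :
  sH_flat s -> right_Amod rV ->
  tens_eq rV (Hl s) (fun _ => True) (@allH k H) (fun _ => False)
    [seq (val p.1, p.2) | p <- u] [seq (val p.1, p.2) | p <- v] ->
  tens_eq (subspace_ract hr) (Hl s) (fun _ => True) (@allH k H) (fun _ => False) u v.
Proof.
move=> hflat hV; apply: (hflat _ _ _ _ val) => //.
- exact: subspace_right_Amod.
- exact: val_inj.
Qed.

Section CoinvariantCoaction.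
Variables (k : fieldType) (A H : algType k) (s t : A -> H)
  (Delta : H -> seq (H * H)) (eps : H -> A).
Hypotheses (hbi : left_bialgebroid s t Delta eps) (hflat : sH_flat s).
Variable I : H -> Prop.
Local Notation N := (tensor s (Hr t) I).
Local Notation tc := (@tclass k A H s H (Hr t) I).
Local Notation rN := (@tensor_ract k A H s t H (Hr t) I).
Local Notation TN :=
  (tens_eq rN (Hl s) (fun _ : N => True) (fun _ : H => True) (fun _ => False)).
Local Notation B := (coinv s t Delta I).
Local Notation TB := (tens_eq (Hr t) (Hl s) (fun _ : H => True) (fun _ : H => True) B).

(* [coinv_diff x] is  pi(x_1) (x) x_2 - pi(1) (x) x  in (H/I) (x)_A H; its
   kernel is the space of coinvariants. *)
Definition coinv_diff (x : H) : N := tc (Delta x ++ [:: (-1, x)]).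

Lemma coinv_diff_lin c x y : coinv_diff (c *: x + y) = c *: coinv_diff x + coinv_diff y.
Proof.
rewrite /coinv_diff tclassZ tclassD; apply/tclassP.
apply: (te_trans (s2 := (scale_fst c (Delta x) ++ Delta y) ++ [:: (-1, c *: x); (-1, y)])).
  by apply: te_cat; [apply: teqQH_of_teqHH; apply: (Delta_lin hbi) | apply: te_addr].
apply: (te_trans (s2 := (scale_fst c (Delta x) ++ Delta y) ++ [:: (c *: -1, x); (-1, y)])).
  apply: tens_eq_catl; apply: (te_cat (s1 := [:: _]) (s2 := [:: _])).
    by apply: te_sym; apply: te_scal.
  exact: tens_eq_refl.
apply: tens_eq_perm; rewrite /scale_fst map_cat /= -!catA perm_cat2l.
by rewrite -cat1s perm_catCA.
Qed.

Lemma coinv_diff_ract a x : coinv_diff (t a * x) = rN (coinv_diff x) a.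
Proof.
rewrite /coinv_diff tensor_ractE; last exact: st_comm hbi.
apply/tclassP; rewrite /mul_snd map_cat; apply: tens_eq_catr.
exact/teqQH_of_teqHH/(Delta_mul_t hbi).
Qed.

Lemma coinv_diff_eq0 x : coinv_diff x = 0 -> B x.
Proof.
rewrite -tclass0 => /tclassP h; apply: (tens_eq_cancel [:: (-1, x)]).
by apply: te_trans h (te_sym (tens_eq_addNr [:: (1, x)])).
Qed.

Lemma coinv_diff_eq x y z :
  coinv_diff x = coinv_diff y -> TB [:: (x, z)] [:: (y, z)].
Proof.
move=> e; have hxy : B (x - y).
  apply: coinv_diff_eq0.
  by rewrite -scaleN1r addrC coinv_diff_lin e scaleN1r addNr.
apply: (te_trans (s2 := [:: (y, z); (x - y, z)])).
  by rewrite -{1}(subrK y x) addrC; apply: te_addl.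
by apply: (tens_eq_catl [:: _]); apply: te_kill.
Qed.

Definition coinv_diff_image (n : N) := exists h, n = coinv_diff h.

Lemma coinv_diff_image_subspace : subspace coinv_diff_image.
Proof.
split; first by exists 0; rewrite (klinear0 coinv_diff_lin).
by move=> c _ _ [x ->] [y ->]; exists (c *: x + y); rewrite coinv_diff_lin.
Qed.

Lemma coinv_diff_image_ract n a : coinv_diff_image n -> coinv_diff_image (rN n a).
Proof. by move=> [x ->]; exists (t a * x); rewrite coinv_diff_ract. Qed.

Local Notation M := (subspace_type coinv_diff_image_subspace).
Local Notation rM := (subspace_ract coinv_diff_image_ract).

Definition coinv_diff_preim (m : M) : H := proj1_sig (cid (subspace_valP m)).

Lemma coinv_diff_preimK (m : M) : coinv_diff (coinv_diff_preim m) = val m.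
Proof. by rewrite /coinv_diff_preim; case: cid. Qed.

Lemma tens_eq_coinv_diff_preim u v :
  tens_eq rM (Hl s) (fun _ => True) (@allH k H) (fun _ => False) u v ->
  TB [seq (coinv_diff_preim p.1, p.2) | p <- u] [seq (coinv_diff_preim p.1, p.2) | p <- v].
Proof.
have hB := full_tens_eq_congruence (Hr t) (Hl s) B.
have preim_eq x m y : val m = coinv_diff x -> TB [:: (coinv_diff_preim m, y)] [:: (x, y)].
  by move=> e; apply: coinv_diff_eq; rewrite coinv_diff_preimK.
rewrite -(flatten_map1 _ u) -(flatten_map1 _ v).
apply: (tens_eq_flatten_map hB) => //=.
- move=> m m' y *.
  apply: (te_trans (s2 := [:: (coinv_diff_preim m + coinv_diff_preim m', y)])).
    by apply: preim_eq; rewrite raddfD /= -!coinv_diff_preimK (klinearD coinv_diff_lin).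
  exact: te_addl.
- by move=> *; apply: te_addr.
- move=> c m y *; apply: (te_trans (s2 := [:: (c *: coinv_diff_preim m, y)])).
    by apply: preim_eq; rewrite linearZ /= -coinv_diff_preimK (klinearZ coinv_diff_lin).
  exact: te_scal.
- move=> y *; apply: (te_trans (s2 := [:: (0, y)])); last exact: te_zero.
  by apply: preim_eq; rewrite (klinear0 coinv_diff_lin).
- move=> a m y *; apply: (te_trans (s2 := [:: (Hr t (coinv_diff_preim m) a, y)])).
    by apply: preim_eq; rewrite /Hr coinv_diff_ract coinv_diff_preimK.
  exact: te_bal.
Qed.

(* Coassociativity turns  pi(b_1) (x) b_2 (x) b_3  into  pi(1) (x) b_1 (x) b_2
   for coinvariant b; this is the vanishing of  (coinv_diff (x) H) Delta b. *)
Lemma coinv_diff_Delta b : B b -> TN [seq (coinv_diff p.1, p.2) | p <- Delta b] [::].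
Proof.
move=> hb; have hN := full_tens_eq_congruence rN (Hl s) (fun _ => False).
set X := [seq (tc [:: (1, p.1)], p.2) | p <- Delta b].
set L3 := flatten [seq [seq (q.1, q.2, p.2) | q <- Delta p.1] | p <- Delta b].
have split_diff : TN [seq (coinv_diff p.1, p.2) | p <- Delta b]
                    (map (tclass_assoc s t I) L3 ++ opp_fst X).
  apply: (te_trans (s2 := flatten [seq [seq (tc [:: q], p.2) | q <- Delta p.1] ++
                                     [:: (tc [:: (-1, p.1)], p.2)] | p <- Delta b])).
    rewrite -flatten_map1; apply: (congr_flatten_map hN) => p _.
    by apply: te_trans (tens_eq_tclass_split s t I _ _) _; rewrite map_cat; apply: tens_eq_refl.
  have -> : map (tclass_assoc s t I) L3 =
      flatten [seq [seq (tc [:: q], p.2) | q <- Delta p.1] | p <- Delta b].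
    rewrite map_flatten -map_comp; congr flatten; apply: eq_map => p /=.
    by rewrite -map_comp; apply: eq_map => -[].
  have -> : opp_fst X = [seq (tc [:: (-1, p.1)], p.2) | p <- Delta b].
    by rewrite /opp_fst -map_comp; apply: eq_map => p; rewrite /= tclassN.
  apply: tens_eq_perm; rewrite -(flatten_map1 (fun p : H * H => (tc [:: (-1, p.1)], p.2))).
  exact: perm_flatten_map_cat.
have coassoc_X : TN (map (tclass_assoc s t I) L3) X.
  apply: te_trans (tens3_eq_tclass_assoc hbi I (coassoc hbi b)) _.
  rewrite map_flatten -map_comp (eq_map (_ : _ =1 Delta_snd s t Delta I)); last first.
    by move=> p; rewrite /= -map_comp.
  apply: te_trans (tens_eq_Delta_snd hbi hb) _.
  by rewrite /= cats0; apply: tens_eq_refl.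
apply: te_trans split_diff _; apply: te_trans (tens_eq_addNr X).
exact: tens_eq_catr.
Qed.

Lemma Delta_coinv b : B b ->
  exists2 z, {in z, forall p, B p.1} & teqHH s t (Delta b) z.
Proof.
move=> hb.
pose m x : M := insubd 0 (coinv_diff x).
have mK x : val (m x) = coinv_diff x by apply: subspace_valK; exists x.
have hM : tens_eq rM (Hl s) (fun _ => True) (@allH k H) (fun _ => False)
            [seq (m p.1, p.2) | p <- Delta b] [::].
  apply: (flat_subspace coinv_diff_image_ract hflat).
    exact: (tensor_right_Amod (t_antimap hbi) (st_comm hbi)).
  by rewrite -map_comp; under eq_map do rewrite /= mK; apply: coinv_diff_Delta.
have hB : TB (Delta b) [::].
  apply: te_trans (tens_eq_coinv_diff_preim hM); rewrite -map_comp -{1}[Delta b]map_id.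
  apply: (congr_map (full_tens_eq_congruence _ _ _)) => -[x y] /=.
  by apply: te_sym; apply: coinv_diff_eq; rewrite coinv_diff_preimK mK.
by have [z hz hDz] := tens_eq_mod_subspace (coinv_subspace hbi I) hB; exists z.
Qed.

End CoinvariantCoaction.

Section CoinvariantTensors.
Variables (k : fieldType) (A H : algType k) (s t : A -> H)
  (Delta : H -> seq (H * H)) (eps : H -> A).
Hypotheses (hbi : left_bialgebroid s t Delta eps) (hflat : sH_flat s).
Variable I : H -> Prop.
Hypothesis hI : left_ideal_coideal s t Delta eps I.
Local Notation B := (coinv s t Delta I).
Local Notation S := (subspace_type (coinv_subspace hbi I)).
Local Notation rS := (subspace_ract (hB := coinv_subspace hbi I) (coinv_ract hbi hI)).
Local Notation TS :=
  (tens_eq rS (Hl s) (fun _ : S => True) (fun _ : H => True) (fun _ => False)).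

Definition val_fst (u : seq (S * H)) := [seq (val p.1, p.2) | p <- u].

Lemma tens_eq_val_fst_inj u v : teqHH s t (val_fst u) (val_fst v) -> TS u v.
Proof. exact/(flat_subspace _ hflat)/(Hr_right_Amod (t_antimap hbi)). Qed.

Lemma teqBH_val_fst u v : TS u v -> teqBH s t B (val_fst u) (val_fst v).
Proof.
rewrite /val_fst -(flatten_map1 _ u) -(flatten_map1 _ v).
apply: (tens_eq_flatten_map (tens_eq_congruence _ _ _ _ _)) => //=.
- by move=> p _ _ q; rewrite inE => /eqP -> /=; split => //; apply: subspace_valP.
- by move=> *; apply: te_addl => //; apply: subspace_valP.
- by move=> *; apply: te_addr => //; apply: subspace_valP.
- by move=> *; apply: te_scal => //; apply: subspace_valP.
- by move=> *; apply: te_zero => //; apply: (subspace_valP (0 : S)).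
- by move=> a m *; apply: te_bal => //; [apply: subspace_valP | apply: (subspace_valP (rS m a))].
Qed.

Lemma teqHH_val_fst u v : TS u v -> teqHH s t (val_fst u) (val_fst v).
Proof. by move/teqBH_val_fst; apply: tens_eq_sub. Qed.

Lemma val_fst_insubd u : {in u, forall p, B p.1} ->
  val_fst [seq (insubd 0 p.1, p.2) | p <- u] = u.
Proof.
move=> hu; rewrite /val_fst -map_comp -[RHS]map_id; apply/eq_in_map => -[x y] /hu /= hx.
by rewrite subspace_valK.
Qed.

Lemma teqBH_of_teqHH u v : {in u, forall p, B p.1} -> {in v, forall p, B p.1} ->
  teqHH s t u v -> teqBH s t B u v.
Proof.
move=> hu hv h; rewrite -(val_fst_insubd hu) -(val_fst_insubd hv).
by apply/teqBH_val_fst/tens_eq_val_fst_inj; rewrite !val_fst_insubd.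
Qed.

Local Notation SH := (tensor s rS (fun _ => False)).
Local Notation HH := (tensor s (Hr t) (@noneH k H)).
Local Notation tcS := (@tclass k A H s S rS (fun _ => False)).
Local Notation tcH := (@tclass k A H s H (Hr t) (@noneH k H)).
Local Notation rSH := (@tensor_ract k A H s t S rS (fun _ => False)).
Local Notation T3B := (tens3_eq (Hr t) (Hl s) (Hr t) (Hl s) B).

Definition tensor_val_fst (X : SH) : HH := tcH (val_fst (trep X)).

Lemma tensor_val_fstE u : tensor_val_fst (tcS u) = tcH (val_fst u).
Proof. by apply/tclassP/teqHH_val_fst/trep_tclass. Qed.

Lemma tensor_val_fst_lin c (X Y : SH) :
  tensor_val_fst (c *: X + Y) = c *: tensor_val_fst X + tensor_val_fst Y.
Proof.
elim/tensor_ind: X => u; elim/tensor_ind: Y => v.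
rewrite tclassZ tclassD !tensor_val_fstE tclassZ tclassD.
by rewrite /val_fst /scale_fst map_cat -!map_comp.
Qed.

Lemma tensor_val_fst_ract (X : SH) a :
  tensor_val_fst (tensor_ract t X a) = tensor_ract t (tensor_val_fst X) a.
Proof.
elim/tensor_ind: X => u.
rewrite [in RHS]tensor_val_fstE !(tensor_ractE (st_comm hbi)) tensor_val_fstE.
by rewrite /val_fst /mul_snd -!map_comp.
Qed.

Lemma tensor_val_fst_inj : injective tensor_val_fst.
Proof.
elim/tensor_ind => u; elim/tensor_ind => v; rewrite !tensor_val_fstE.
by move/tclassP/tens_eq_val_fst_inj/tclassP.
Qed.

Lemma tens3_eq_val_fst z u v : TS u v ->
  T3B [seq (val q.1, q.2, z) | q <- u] [seq (val q.1, q.2, z) | q <- v].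
Proof.
rewrite -(flatten_map1 _ u) -(flatten_map1 _ v).
apply: (tens_eq_flatten_map (tens3_eq_congruence _ _ _ _ _)) => //=.
- by move=> p _ _ q; rewrite inE => /eqP -> /=; apply: subspace_valP.
- by move=> *; apply: t3_add1; apply: subspace_valP.
- by move=> *; apply: t3_add2; apply: subspace_valP.
- by move=> *; apply: t3_scal12; apply: subspace_valP.
- by move=> *; apply: t3_zero; apply: (subspace_valP (0 : S)).
- by move=> a m *; apply: t3_bal12; [apply: subspace_valP | apply: (subspace_valP (rS m a))].
Qed.

Definition tensor_unassoc (p : SH * H) := [seq (val q.1, q.2, p.2) | q <- trep p.1].

Lemma tens3_eq_unassoc u v :
  tens_eq rSH (Hl s) (fun _ => True) (@allH k H) (fun _ => False) u v ->
  T3B (flatten (map tensor_unassoc u)) (flatten (map tensor_unassoc v)).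
Proof.
have h3 := tens3_eq_congruence (Hr t) (Hl s) (Hr t) (Hl s) B.
apply: (tens_eq_flatten_map h3); rewrite /tensor_unassoc /=.
- by move=> [X y] _ _ q /mapP [p _ ->]; apply: subspace_valP.
- move=> X X' y _ _ _; rewrite -map_cat.
  have -> : X + X' = tcS (trep X ++ trep X') by rewrite -tclassD !trepK.
  exact/tens3_eq_val_fst/trep_tclass.
- move=> X y y' _ _ _; apply: (congr_map_split h3) => q.
    by split; apply: subspace_valP.
  by apply: t3_add3; apply: subspace_valP.
- move=> c X y _ _; rewrite -{1}(trepK X) tclassZ.
  apply: t3_trans (tens3_eq_val_fst y (trep_tclass _ _ _ _)) _.
  rewrite /scale_fst -map_comp; apply: (congr_map h3) => q /=.
  apply: (t3_trans (s2 := [:: (val q.1, c *: q.2, y)])).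
    by apply: t3_scal12; apply: subspace_valP.
  by apply: t3_scal23; apply: subspace_valP.
- by move=> y _ _; apply: (tens3_eq_val_fst y (trep_tclass _ _ _ [::])).
- move=> a X y _ _ _ _; apply: t3_trans (tens3_eq_val_fst y (trep_tclass _ _ _ _)) _.
  rewrite /mul_snd -map_comp; apply: (congr_map h3) => q /=.
  by apply: (t3_bal23 (Hr t) (Hl s)); apply: subspace_valP.
- by [].
Qed.

(* Flatness twice: B (x) H (x) H = (B (x) H) (x) H embeds in (H (x) H) (x) H. *)
Lemma teqB3_of_allH u v :
  wf3 B u -> wf3 B v -> teqB3 s t (@allH k H) u v -> teqB3 s t B u v.
Proof.
move=> hu hv h.
pose g (x : H * H * H) : SH * H := (tcS [:: (insubd 0 x.1.1, x.1.2)], x.2).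
have g_assoc w : wf3 B w ->
    [seq (tensor_val_fst p.1, p.2) | p <- map g w] = map (tclass_assoc s t (@noneH k H)) w.
  move=> hw; rewrite -map_comp; apply/eq_in_map => x /hw hx /=.
  by rewrite tensor_val_fstE /val_fst /= subspace_valK.
have hHH := tens3_eq_tclass_assoc hbi (@noneH k H) h.
rewrite -(g_assoc _ hu) -(g_assoc _ hv) in hHH.
have hr := tensor_right_Amod (t_antimap hbi) (st_comm hbi).
have hSH := hflat (hr _ _ _) (hr _ _ _)
  tensor_val_fst_lin tensor_val_fst_ract tensor_val_fst_inj hHH.
have g_unassoc w : wf3 B w -> T3B (flatten (map tensor_unassoc (map g w))) w.
  move=> hw; rewrite -map_comp.
  apply: (t3_trans (s2 := [seq (val (insubd 0 x.1.1 : S), x.1.2, x.2) | x <- w])).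
    rewrite -(flatten_map1 (fun x : H * H * H => (val (insubd 0 x.1.1 : S), x.1.2, x.2))).
    apply: (congr_flatten_map (tens3_eq_congruence _ _ _ _ _)) => x _.
    exact: (tens3_eq_val_fst x.2 (trep_tclass _ _ _ [:: (insubd 0 x.1.1, x.1.2)])).
  have -> : [seq (val (insubd 0 x.1.1 : S), x.1.2, x.2) | x <- w] = w.
    by rewrite -[RHS]map_id; apply/eq_in_map => -[[x y] z] /hw /= hx; rewrite subspace_valK.
  exact: t3_refl.
exact: t3_trans (t3_sym (g_unassoc _ hu)) (t3_trans (tens3_eq_unassoc hSH) (g_unassoc _ hv)).
Qed.

End CoinvariantTensors.

Section CoproductFunctoriality.
Variables (k : fieldType) (A H : algType k) (s t : A -> H)
  (Delta : H -> seq (H * H)) (eps : H -> A).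
Hypothesis hbi : left_bialgebroid s t Delta eps.
Local Notation HH := (teqHH s t).
Local Notation T3 := (teqB3 s t (@allH k H)).

Lemma sum_counit_snd_eq u v : HH u v ->
  \sum_(p <- u) t (eps p.2) * p.1 = \sum_(p <- v) t (eps p.2) * p.1.
Proof.
elim=> {u v}.
- by [].
- by move=> u v _ ->.
- by move=> u v w _ -> _ ->.
- by move=> u1 v1 u2 v2 _ e1 _ e2; rewrite !big_cat e1 e2.
- by move=> u v _ _; rewrite !big_cat [LHS]addrC.
- by move=> *; rewrite !big_cons big_nil !addr0 mulrDr.
- by move=> *; rewrite !big_cons big_nil !addr0 (epsD hbi) (tD hbi) mulrDl.
- by move=> *; rewrite !big_cons big_nil !addr0 (epsZ hbi) (tZ hbi) -scalerAl scalerAr.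
- by move=> *; rewrite big_cons big_nil mulr0 addr0.
- by move=> *; rewrite !big_cons big_nil !addr0 /Hr /Hl (eps_mul_s hbi) (tM hbi) mulrA.
- by move=> ? ? _ [].
Qed.

Lemma tens3_eq_append z u v : HH u v ->
  T3 [seq (q.1, q.2, z) | q <- u] [seq (q.1, q.2, z) | q <- v].
Proof.
rewrite -(flatten_map1 _ u) -(flatten_map1 _ v).
apply: (tens_eq_flatten_map (tens3_eq_congruence _ _ _ _ _)) => //=.
- by move=> *; apply: t3_add1.
- by move=> *; apply: t3_add2.
- by move=> *; apply: t3_scal12.
- by move=> *; apply: t3_zero.
- by move=> *; apply: t3_bal12.
Qed.

Lemma tens3_eq_prepend x u v : HH u v ->
  T3 [seq (x, q.1, q.2) | q <- u] [seq (x, q.1, q.2) | q <- v].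
Proof.
rewrite -(flatten_map1 _ u) -(flatten_map1 _ v).
apply: (tens_eq_flatten_map (tens3_eq_congruence _ _ _ _ _)) => //=.
- by move=> *; apply: t3_add2.
- by move=> *; apply: t3_add3.
- by move=> *; apply: t3_scal23.
- move=> y *; apply: (t3_trans (s2 := [:: (0 *: x, 0, y)])).
    by rewrite -{1}(scale0r (0 : H)); apply: t3_sym; apply: t3_scal12.
  by rewrite scale0r; apply: t3_zero.
- by move=> *; apply: t3_bal23.
Qed.

Definition Delta_fst3 (p : H * H) := [seq (q.1, q.2, p.2) | q <- Delta p.1].
Definition Delta_snd3 (p : H * H) := [seq (p.1, q.1, q.2) | q <- Delta p.2].

Lemma tens3_eq_Delta_fst3 u v : HH u v ->
  T3 (flatten (map Delta_fst3 u)) (flatten (map Delta_fst3 v)).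
Proof.
have h3 := tens3_eq_congruence (Hr t) (Hl s) (Hr t) (Hl s) (@allH k H).
apply: (tens_eq_flatten_map h3) => //; rewrite /Delta_fst3 /=.
- by move=> *; rewrite -map_cat; apply: tens3_eq_append; apply: (DeltaD hbi).
- by move=> *; apply: (congr_map_split h3) => // q; apply: t3_add3.
- move=> c x y *; apply: t3_trans (tens3_eq_append y (DeltaZ hbi c x)) _.
  rewrite /scale_fst -map_comp; apply: (congr_map h3) => q /=.
  by apply: (t3_trans (s2 := [:: (q.1, c *: q.2, y)])); [apply: t3_scal12 | apply: t3_scal23].
- by move=> y *; apply: (tens3_eq_append y (Delta0 hbi)).
- move=> a x y *; apply: t3_trans (tens3_eq_append y (Delta_mul_t hbi a x)) _.
  rewrite /mul_snd -map_comp; apply: (congr_map h3) => q /=.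
  exact: (t3_bal23 (Hr t) (Hl s)).
Qed.

Lemma tens3_eq_Delta_snd3 u v : HH u v ->
  T3 (flatten (map Delta_snd3 u)) (flatten (map Delta_snd3 v)).
Proof.
have h3 := tens3_eq_congruence (Hr t) (Hl s) (Hr t) (Hl s) (@allH k H).
apply: (tens_eq_flatten_map h3) => //; rewrite /Delta_snd3 /=.
- by move=> *; apply: (congr_map_split h3) => // q; apply: t3_add1.
- by move=> *; rewrite -map_cat; apply: tens3_eq_prepend; apply: (DeltaD hbi).
- move=> c x y *; apply: t3_sym; apply: t3_trans (tens3_eq_prepend x (DeltaZ hbi c y)) _.
  rewrite /scale_fst -map_comp; apply: (congr_map h3) => q /=.
  by apply: t3_sym; apply: t3_scal12.
- by move=> *; apply: (congr_map_nil h3) => q; apply: t3_zero.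
- move=> a x y *; apply: t3_sym; apply: t3_trans (tens3_eq_prepend x (Delta_mul_s hbi a y)) _.
  rewrite -map_comp; apply: (congr_map h3) => q /=.
  by apply: t3_sym; apply: t3_bal12.
Qed.

End CoproductFunctoriality.

Section CoinvariantComodule.
Variables (k : fieldType) (A H : algType k) (s t : A -> H)
  (Delta : H -> seq (H * H)) (eps : H -> A).
Hypotheses (hbi : left_bialgebroid s t Delta eps) (hflat : sH_flat s).
Variable I : H -> Prop.
Hypothesis hI : left_ideal_coideal s t Delta eps I.
Local Notation B := (coinv s t Delta I).

(* Junk value [::] when b is not coinvariant. *)
Definition coinv_coaction (b : H) : seq (H * H) :=
  if pselect (exists2 z, {in z, forall p, B p.1} & teqHH s t (Delta b) z) is left e
  then s2val (cid2 e) else [::].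

Lemma coinv_coactionP b : B b ->
  {in coinv_coaction b, forall p, B p.1} /\ teqHH s t (Delta b) (coinv_coaction b).
Proof.
move=> hb; rewrite /coinv_coaction; case: pselect => [e|[]]; last exact: (Delta_coinv hbi hflat hb).
by case: (cid2 e).
Qed.

Lemma coinv_coaction_lin c x y : B x -> B y ->
  teqBH s t B (coinv_coaction (c *: x + y))
    (scale_fst c (coinv_coaction x) ++ coinv_coaction y).
Proof.
move=> hx hy; have [Bxy exy] := coinv_coactionP (coinv_lin hbi c hx hy).
have [Bx ex] := coinv_coactionP hx; have [By ey] := coinv_coactionP hy.
apply: (teqBH_of_teqHH hbi hflat hI) => //.
  move=> p; rewrite mem_cat => /orP [/mapP [q /Bx Bq ->] | /By //].
  exact: (subspaceZ (coinv_subspace hbi I)).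
apply: te_trans (te_sym exy) _; apply: te_trans (Delta_lin hbi c x y) _.
by apply: te_cat ey; apply: tens_eq_scale ex; exact: Hl_scale.
Qed.

Lemma coinv_coaction_ract a b : B b ->
  teqBH s t B (coinv_coaction (t a * b)) (mul_snd (t a) (coinv_coaction b)).
Proof.
move=> hb; have [Bab eab] := coinv_coactionP (coinv_ract hbi hI a hb).
have [Bb eb] := coinv_coactionP hb.
apply: (teqBH_of_teqHH hbi hflat hI) => //; first by move=> p /mapP [q /Bb ? ->].
apply: te_trans (te_sym eab) _; apply: te_trans (Delta_mul_t hbi a b) _.
exact: (tens_eq_mul_snd (fun c => st_comm hbi c a) eb).
Qed.

Lemma coinv_coaction_coassoc b : B b ->
  teqB3 s t B
    (flatten [seq [seq (q.1, q.2, p.2) | q <- coinv_coaction p.1] | p <- coinv_coaction b])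
    (flatten [seq [seq (p.1, q.1, q.2) | q <- Delta p.2] | p <- coinv_coaction b]).
Proof.
move=> hb; have [Bb eb] := coinv_coactionP hb.
apply: (teqB3_of_allH hbi hflat hI).
- move=> x /flatten_mapP [p /Bb Bp /mapP [q hq ->]] /=.
  by case: (coinv_coactionP Bp) => Bq _; apply: Bq.
- by move=> x /flatten_mapP [p /Bb Bp /mapP [q _ ->]].
apply: (t3_trans (s2 := flatten (map (Delta_fst3 Delta) (coinv_coaction b)))).
  apply: (congr_flatten_map (tens3_eq_congruence _ _ _ _ _)) => p /Bb Bp.
  by case: (coinv_coactionP Bp) => _ ep; apply: tens3_eq_append; apply: te_sym.
apply: t3_trans (tens3_eq_Delta_fst3 hbi (te_sym eb)) _.
apply: t3_trans (coassoc hbi b) _.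
exact: (tens3_eq_Delta_snd3 hbi eb).
Qed.

Lemma coinv_coaction_counit b : B b ->
  \sum_(p <- coinv_coaction b) t (eps p.2) * p.1 = b.
Proof.
move=> hb; have [_ eb] := coinv_coactionP hb.
by rewrite -(sum_counit_snd_eq hbi eb) (counit_r hbi).
Qed.

Lemma coinv_right_comodule_subring :
  right_comodule_subring s t Delta eps B coinv_coaction.
Proof.
split.
- split; [exact: (coinv0 hbi) | exact: (coinv1 hbi) | exact: (coinv_lin hbi)
         | exact: (coinv_mul hbi hI) | exact: (coinv_t hbi)].
- by move=> b /coinv_coactionP [].
- exact: coinv_coaction_lin.
- exact: coinv_coaction_ract.
split.
- exact: coinv_coaction_coassoc.
- exact: coinv_coaction_counit.
- by move=> b /coinv_coactionP [_ /te_sym].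
Qed.

End CoinvariantComodule.

Theorem proposition2p4 (k : fieldType) (A H : algType k) (s t : A -> H)
    (Delta : H -> seq (H * H)) (eps : H -> A) :
  left_bialgebroid s t Delta eps ->
  sH_flat s ->
  (forall I : H -> Prop, left_ideal_coideal s t Delta eps I ->
     exists delta : H -> seq (H * H),
       right_comodule_subring s t Delta eps (coinv s t Delta I) delta) /\
  (forall I J : H -> Prop,
     left_ideal_coideal s t Delta eps I -> left_ideal_coideal s t Delta eps J ->
     (forall x, I x -> J x) -> forall x, coinv s t Delta I x -> coinv s t Delta J x).
Proof.
move=> hbi hflat; split=> [I hI | I J _ _]; last exact: coinv_mono.
by exists (coinv_coaction s t Delta I); apply: coinv_right_comodule_subring.
Qed.
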